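(* Let $\mathcal{F}$ be a $3$-uniform linear family and $\mathcal{M}$ a maximum matching of $\mathcal{F}$. Then for all distinct $A,B\in\mathcal{M}$, $|D_2(A,B)|\leq 8$.
   Context: A family is a finite collection of distinct subsets of a vertex set; $3$-uniform means every member has exactly $3$ elements and linear means any two distinct members share at most one vertex. A matching is a collection of pairwise disjoint members; a maximum matching is one of largest possible size. $X_{\mathcal{M}}=\bigcup_{A\in\mathcal{M}}A$, $D_2(\mathcal{F})=\{E\in\mathcal{F}:|E\cap X_{\mathcal{M}}|=2\}$, and for $A,B\in\mathcal{M}$, $D_2(A,B)=\{C\in D_2(\mathcal{F}): C\cap A\neq\emptyset,\ C\cap B\neq\emptyset\}$. *)

From mathcomp Require Import all_boot.
Set Implicit Arguments. Unset Strict Implicit. Unset Printing Implicit Defensive.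

Definition uniform3 (T : finType) (F : {set {set T}}) : Prop :=
  forall E, E \in F -> #|E| = 3.

Definition linear_family (T : finType) (F : {set {set T}}) : Prop :=
  forall E E', E \in F -> E' \in F -> E != E' -> #|E :&: E'| <= 1.

Definition matching (T : finType) (F M : {set {set T}}) : Prop :=
  M \subset F /\
  forall A B, A \in M -> B \in M -> A != B -> [disjoint A & B].

Definition maximum_matching (T : finType) (F M : {set {set T}}) : Prop :=
  matching F M /\ forall M', matching F M' -> #|M'| <= #|M|.

Definition XM (T : finType) (M : {set {set T}}) : {set T} := cover M.

Definition D2 (T : finType) (F M : {set {set T}}) : {set {set T}} :=
  [set E in F | #|E :&: XM M| == 2].

Definition D2AB (T : finType) (F M : {set {set T}}) (A B : {set T})
  : {set {set T}} :=
  [set C in D2 F M | (C :&: A != set0) && (C :&: B != set0)].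

(* If |D2(A,B)| > 8, then, as linearity lets each pair (a,b) of A x B lie in
   at most one member of D2(A,B), every such pair spans an edge {a, b, v(a,b)}
   with v(a,b) outside X_M.  Linearity also makes v injective in each
   argument, so the 3 x 3 array v has a transversal with three distinct
   entries.  The three corresponding edges are pairwise disjoint and can
   replace A and B in M, contradicting the maximality of M. *)

From mathcomp Require Import all_boot.
Set Implicit Arguments. Unset Strict Implicit. Unset Printing Implicit Defensive.

Lemma card_set3 (T : finType) (x y z : T) :
  x != y -> x != z -> y != z -> #|[set x; y; z]| = 3.
Proof.
by move=> xy xz yz; rewrite -setUA cardsU1 cards2 yz !inE negb_or xy xz.
Qed.

Lemma card3_set3 (T : finType) (A : {set T}) : #|A| = 3 ->
  exists x y z, [/\ x != y, x != z, y != z & A = [set x; y; z]].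
Proof.
move=> cA; have /card_gt2P[x [y [z [[xA yA zA] [xy yz zx]]]]] : 2 < #|A| by rewrite cA.
exists x, y, z; rewrite eq_sym in zx; split=> //; apply/esym/eqP.
rewrite eqEcard card_set3 // cA leqnn andbT.
by apply/subsetP => w; rewrite !inE -!orbA => /or3P[]/eqP->.
Qed.

Lemma inj_on_set3 (I : finType) (W : eqType) (h : I -> W) (x0 x1 x2 : I) :
  uniq [:: h x0; h x1; h x2] -> {in [set x0; x1; x2] &, injective h}.
Proof.
rewrite /= !inE !negb_or andbT => /andP[/andP[n01 n02] n12] x y.
rewrite !inE -!orbA => /or3P[]/eqP-> /or3P[]/eqP-> // E;
  by move: n01 n02 n12; rewrite E eqxx.
Qed.

(* Equal entries lie in distinct rows and columns, and two such cells lie in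
   exactly one transversal; so each repeated value spoils at most one of the
   six transversals, and spoiling all of them would take twelve cells. *)
Lemma latin3_core (V : eqType) (s00 s01 s02 s10 s11 s12 s20 s21 s22 : V) :
  uniq [:: s00; s01; s02] -> uniq [:: s10; s11; s12] -> uniq [:: s20; s21; s22] ->
  uniq [:: s00; s10; s20] -> uniq [:: s01; s11; s21] -> uniq [:: s02; s12; s22] ->
  [|| uniq [:: s00; s11; s22], uniq [:: s00; s12; s21], uniq [:: s01; s10; s22],
      uniq [:: s01; s12; s20], uniq [:: s02; s10; s21] | uniq [:: s02; s11; s20]].
Proof.
have uniq3_neq (u v w : V) : uniq [:: u; v; w] -> [/\ u <> v, u <> w & v <> w].
  by rewrite /= !inE !negb_or andbT => /andP[/andP[/eqP ? /eqP ?] /eqP ?].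
have uniq3_or (u v w : V) : uniq [:: u; v; w] \/ [\/ u = v, u = w | v = w].
  case: (eqVneq u v) => [|uv]; first by right; constructor 1.
  case: (eqVneq u w) => [|uw]; first by right; constructor 2.
  case: (eqVneq v w) => [|vw]; first by right; constructor 3.
  by left; rewrite /= !inE !negb_or uv uw vw.
move=> /uniq3_neq[? ? ?] /uniq3_neq[? ? ?] /uniq3_neq[? ? ?].
move=> /uniq3_neq[? ? ?] /uniq3_neq[? ? ?] /uniq3_neq[? ? ?].
case: (uniq3_or s00 s11 s22) => [->//|E1]; case: (uniq3_or s00 s12 s21) => [->|E2]; rewrite ?orbT //.
case: (uniq3_or s01 s10 s22) => [->|E3]; rewrite ?orbT //.
case: (uniq3_or s01 s12 s20) => [->|E4]; rewrite ?orbT //.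
case: (uniq3_or s02 s10 s21) => [->|E5]; rewrite ?orbT //.
case: (uniq3_or s02 s11 s20) => [->|E6]; rewrite ?orbT //.
by case: E1 => ?; case: E2 => ?; case: E3 => ?; case: E4 => ?; case: E5 => ?; case: E6 => ?;
  congruence.
Qed.

Lemma latin3_transversal (I J : finType) (V : eqType) (f : I -> J -> V)
    (X : {set I}) (Y : {set J}) :
  #|X| = 3 -> #|Y| = 3 ->
  {in X, forall x, {in Y &, injective (f x)}} ->
  {in Y, forall y, {in X &, injective (f^~ y)}} ->
  exists g : I -> J, [/\ {in X, forall x, g x \in Y}, {in X &, injective g}
                       & {in X &, injective (fun x => f x (g x))}].
Proof.
move=> /card3_set3[x0 [x1 [x2 [x01 x02 x12 ->]]]].
move=> /card3_set3[y0 [y1 [y2 [y01 y02 y12 ->]]]] rowf colf.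
suff [z0 [z1 [z2 [fz zy]]]] : exists z0 z1 z2,
    uniq [:: f x0 z0; f x1 z1; f x2 z2] /\ perm_eq [:: z0; z1; z2] [:: y0; y1; y2].
  pose g x := if x == x0 then z0 else if x == x1 then z1 else z2.
  have [g0 g1 g2] : [/\ g x0 = z0, g x1 = z1 & g x2 = z2].
    by rewrite /g !eqxx (eq_sym x1) !(eq_sym x2) (negbTE x01) (negbTE x02) (negbTE x12).
  exists g; split.
  - have zY z : z \in [:: z0; z1; z2] -> z \in [set y0; y1; y2].
      by rewrite (perm_mem zy) !inE -!orbA.
    move=> x xX; apply: zY; move: xX; rewrite !inE -!orbA.
    by case/or3P=> /eqP->; rewrite ?g0 ?g1 ?g2 eqxx ?orbT.
  - by apply: inj_on_set3; rewrite g0 g1 g2 (perm_uniq zy) /= !inE !negb_or y01 y02 y12.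
  - by apply: inj_on_set3; rewrite g0 g1 g2.
have [memX0 memX1 memX2] : [/\ x0 \in [set x0; x1; x2], x1 \in [set x0; x1; x2]
    & x2 \in [set x0; x1; x2]] by rewrite !inE !eqxx !orbT.
have [memY0 memY1 memY2] : [/\ y0 \in [set y0; y1; y2], y1 \in [set y0; y1; y2]
    & y2 \in [set y0; y1; y2]] by rewrite !inE !eqxx !orbT.
have row x : x \in [set x0; x1; x2] -> uniq [:: f x y0; f x y1; f x y2].
  move=> xX; rewrite /= !inE !negb_or andbT.
  by rewrite !(inj_in_eq (rowf x xX)) // y01 y02 y12.
have col y : y \in [set y0; y1; y2] -> uniq [:: f x0 y; f x1 y; f x2 y].
  move=> yY; rewrite /= !inE !negb_or andbT.
  by rewrite !(inj_in_eq (colf y yY)) // x01 x02 x12.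
have := latin3_core (row x0 memX0) (row x1 memX1) (row x2 memX2)
  (col y0 memY0) (col y1 memY1) (col y2 memY2).
case/orP=> [|/orP[|/orP[|/orP[|/orP[]]]]] fz;
  [exists y0, y1, y2 | exists y0, y2, y1 | exists y1, y0, y2
  | exists y1, y2, y0 | exists y2, y0, y1 | exists y2, y1, y0];
  by split=> //; apply/permP => p /=; case: (p y0) (p y1) (p y2) => [] [] [].
Qed.

Lemma disjoint_set3 (T : finType) (P Q R : {set T}) a b c a' b' c' :
  [disjoint P & Q] -> [disjoint P & R] -> [disjoint Q & R] ->
  a \in P -> a' \in P -> b \in Q -> b' \in Q -> c \in R -> c' \in R ->
  a != a' -> b != b' -> c != c' -> [disjoint [set a; b; c] & [set a'; b'; c']].
Proof.
move=> PQ PR QR aP a'P bQ b'Q cR c'R aa' bb' cc'.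
rewrite -setI_eq0; apply/set0Pn => -[x]; rewrite !inE -!orbA.
case/andP=> /or3P[]/eqP-> /or3P[]/eqP E.
- by rewrite E eqxx in aa'.
- by rewrite -E (disjointFr PQ aP) in b'Q.
- by rewrite -E (disjointFr PR aP) in c'R.
- by rewrite E (disjointFr PQ a'P) in bQ.
- by rewrite E eqxx in bb'.
- by rewrite -E (disjointFr QR bQ) in c'R.
- by rewrite E (disjointFr PR a'P) in cR.
- by rewrite E (disjointFr QR b'Q) in cR.
- by rewrite E eqxx in cc'.
Qed.

Lemma linear_family_eq (T : finType) (F : {set {set T}}) (C C' : {set T}) p q :
  linear_family F -> C \in F -> C' \in F -> p != q ->
  p \in C -> p \in C' -> q \in C -> q \in C' -> C = C'.
Proof.
move=> linF CF C'F pq pC pC' qC qC'; apply/eqP; apply: contraTT isT => CC'.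
have pq_sub : [set p; q] \subset C :&: C'.
  by apply/subsetP => x /set2P[]->; rewrite inE ?pC ?qC.
by have := leq_trans (subset_leq_card pq_sub) (linF C C' CF C'F CC'); rewrite cards2 pq.
Qed.

Lemma sub_XM (T : finType) (M : {set {set T}}) E : E \in M -> E \subset XM M.
Proof. exact: bigcup_sup. Qed.

Lemma matching_setU (T : finType) (F M1 M2 : {set {set T}}) :
  matching F M1 -> matching F M2 ->
  (forall E E', E \in M1 -> E' \in M2 -> [disjoint E & E']) ->
  matching F (M1 :|: M2).
Proof.
move=> [M1F dis1] [M2F dis2] dis12; split; first by rewrite subUset M1F M2F.
move=> E E' /setUP[EM|EM] /setUP[E'M|E'M] EE'; first exact: dis1.
- exact: dis12.
- by rewrite disjoint_sym; apply: dis12.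
- exact: dis2.
Qed.

Lemma sub_matching (T : finType) (F M M' : {set {set T}}) :
  M' \subset M -> matching F M -> matching F M'.
Proof.
move=> sM'M [MF Mdisj]; split; first exact: subset_trans MF.
by move=> E E' /(subsetP sM'M) EM /(subsetP sM'M); apply: Mdisj.
Qed.

(* Otherwise (M minus A and B) together with N is a larger matching. *)
Lemma maximum_matching_exchange (T : finType) (F M N : {set {set T}}) (A B : {set T}) :
  uniform3 F -> maximum_matching F M -> A \in M -> B \in M -> A != B ->
  matching F N -> {in N, forall C, C :&: XM M \subset A :|: B} -> #|N| <= 2.
Proof.
move=> F3 [matchM Mmax] AM BM AB matchN NX; have [MF Mdisj] := matchM.
set M0 := M :\ A :\ B.
have M0_N E C : E \in M0 -> C \in N -> [disjoint E & C].
  rewrite !inE => /and3P[EB EA EM] CN.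
  rewrite -setI_eq0; apply/set0Pn => -[x /setIP[xE xC]].
  have : x \in C :&: XM M by rewrite inE xC (subsetP (sub_XM EM)).
  case/(subsetP (NX C CN))/setUP => [xA|xB].
  - by rewrite (disjointFr (Mdisj E A EM AM EA) xE) in xA.
  - by rewrite (disjointFr (Mdisj E B EM BM EB) xE) in xB.
have M0N0 : M0 :&: N = set0.
  apply/setP => E; rewrite inE in_set0; apply/andP => -[EM0 EN].
  have := M0_N E E EM0 EN; rewrite -setI_eq0 setIid => /eqP E0.
  by have := F3 E (subsetP matchN.1 E EN); rewrite E0 cards0.
have matchM0 : matching F M0.
  by apply: sub_matching matchM; exact: subset_trans (subD1set _ B) (subD1set M A).
have cardM : #|M| = #|M0| + 2.
  by rewrite (cardsD1 A M) AM (cardsD1 B (M :\ A)) !inE eq_sym AB BM addnA addnC.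
have := Mmax (M0 :|: N) (matching_setU matchM0 matchN M0_N).
by rewrite cardsU M0N0 cards0 subn0 cardM leq_add2l.
Qed.

Lemma D2_triple (T : finType) (F M : {set {set T}}) C a b :
  uniform3 F -> C \in D2 F M -> a \in C -> b \in C -> a \in XM M -> b \in XM M ->
  a != b -> exists2 v, v \notin XM M & C = [set a; b; v].
Proof.
move=> F3; rewrite inE => /andP[CF /eqP cardCX] aC bC aX bX ab.
have /subsetPn[v vC vX] : ~~ (C \subset XM M).
  by apply/negP => /setIidPl CX; move: cardCX; rewrite CX (F3 C CF).
have av : a != v by apply: contraNneq vX => <-.
have bv : b != v by apply: contraNneq vX => <-.
exists v => //; apply/eqP; rewrite eq_sym eqEcard (F3 C CF) (card_set3 ab av bv) andbT.
by apply/subsetP => x; rewrite !inE -!orbA => /or3P[]/eqP->.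
Qed.

Section TwoMatchedMembers.

Variables (T : finType) (F M : {set {set T}}) (A B : {set T}).
Hypotheses (F3 : uniform3 F) (linF : linear_family F) (matchM : matching F M).
Hypotheses (AM : A \in M) (BM : B \in M) (AB : A != B).
Local Notation X := (XM M).

Let dAB : [disjoint A & B] := matchM.2 A B AM BM AB.
Let AX a : a \in A -> a \in X := subsetP (sub_XM AM) a.
Let BX b : b \in B -> b \in X := subsetP (sub_XM BM) b.

Lemma D2AB_covers_pairs : 8 < #|D2AB F M A B| ->
  {in A & B, forall a b, exists2 C, C \in D2AB F M A B & (a \in C) && (b \in C)}.
Proof.
move=> D2AB_gt8 a b aA bB; set D := D2AB F M A B.
pose h C := (odflt a [pick x in C :&: A], odflt b [pick y in C :&: B]).
have hP C : C \in D -> (h C).1 \in C :&: A /\ (h C).2 \in C :&: B.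
  move=> /setIdP[_ /andP[/set0Pn[x xCA] /set0Pn[y yCB]]]; rewrite /h /=; split.
  - by case: pickP => [x' ->|/(_ x)]; rewrite ?xCA.
  - by case: pickP => [y' ->|/(_ y)]; rewrite ?yCB.
have h_inj : {in D &, injective h}.
  move=> C C' CD C'D hCC'; have [/setIP[pC pA] /setIP[qC qB]] := hP C CD.
  have [] := hP C' C'D; rewrite -hCC' => /setIP[pC' _] /setIP[qC' _].
  have CF E : E \in D -> E \in F by move=> /setIdP[/setIdP[]].
  apply: linear_family_eq linF (CF C CD) (CF C' C'D) _ pC pC' qC qC'.
  by apply: contraTneq qB => <-; rewrite (disjointFr dAB pA).
have card_A : #|A| = 3 by apply: F3; apply: (subsetP matchM.1).
have card_B : #|B| = 3 by apply: F3; apply: (subsetP matchM.1).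
have : (a, b) \in h @: D.
  suff -> : h @: D = setX A B by rewrite inE aA bB.
  apply/eqP; rewrite eqEcard cardsX card_A card_B (card_in_imset h_inj) D2AB_gt8 andbT.
  by apply/subsetP => _ /imsetP[C CD ->]; have [/setIP[_ ?] /setIP[_ ?]] := hP C CD; apply/setXP.
case/imsetP => C CD habC; have := hP C CD; rewrite -habC => -[/setIP[aC _] /setIP[bC _]].
by exists C => //; rewrite aC bC.
Qed.

(* The vertex outside X_M completing an edge through a and b; the default [a]
   only occurs when there is no such edge. *)
Definition apex (a b : T) : T :=
  odflt a [pick v | (v \notin XM M) && ([set a; b; v] \in F)].

Hypothesis D2AB_gt8 : 8 < #|D2AB F M A B|.

Lemma apexP a b : a \in A -> b \in B -> (apex a b \notin X) && ([set a; b; apex a b] \in F).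
Proof.
move=> aA bB; have [C /setIdP[CD2 _] /andP[aC bC]] := D2AB_covers_pairs D2AB_gt8 aA bB.
have ab : a != b by apply: contraTneq bB => <-; rewrite (disjointFr dAB aA).
have [v vX defC] := D2_triple F3 CD2 aC bC (AX aA) (BX bB) ab.
rewrite /apex; case: pickP => [v' -> //|/(_ v)].
by rewrite vX -defC; case/setIdP: CD2 => ->.
Qed.

Lemma apex_injl : {in A, forall a, {in B &, injective (apex a)}}.
Proof.
move=> a aA b b' bB b'B vv'.
have /andP[vX CF] := apexP aA bB; have /andP[_] := apexP aA b'B; rewrite -vv' => C'F.
set v := apex a b in vX CF C'F.
have av : a != v by apply: contraNneq vX => <-; apply: AX.
have CC' : [set a; b; v] = [set a; b'; v].
  by apply: (linear_family_eq linF CF C'F av); rewrite !inE eqxx ?orbT.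
have : b' \in [set a; b; v] by rewrite CC' !inE eqxx orbT.
rewrite !inE -!orbA => /or3P[]/eqP b'E.
- by rewrite b'E (disjointFr dAB aA) in b'B.
- by rewrite b'E.
- by rewrite -b'E BX in vX.
Qed.

Lemma apex_injr : {in B, forall b, {in A &, injective (apex^~ b)}}.
Proof.
move=> b bB a a' aA a'A /= vv'.
have /andP[vX CF] := apexP aA bB; have /andP[_] := apexP a'A bB; rewrite -vv' => C'F.
set v := apex a b in vX CF C'F.
have bv : b != v by apply: contraNneq vX => <-; apply: BX.
have CC' : [set a; b; v] = [set a'; b; v].
  by apply: (linear_family_eq linF CF C'F bv); rewrite !inE eqxx ?orbT.
have : a' \in [set a; b; v] by rewrite CC' !inE eqxx.
rewrite !inE -!orbA => /or3P[]/eqP a'E.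
- by rewrite a'E.
- by rewrite -a'E (disjointFr dAB a'A) in bB.
- by rewrite -a'E AX in vX.
Qed.

Variable g : T -> T.
Hypotheses (gB : {in A, forall a, g a \in B}) (g_inj : {in A &, injective g})
  (apex_g_inj : {in A &, injective (fun a => apex a (g a))}).

Definition transversal_edges := [set [set a; g a; apex a (g a)] | a in A].

Lemma transversal_edges_disjoint a a' : a \in A -> a' \in A -> a != a' ->
  [disjoint [set a; g a; apex a (g a)] & [set a'; g a'; apex a' (g a')]].
Proof.
move=> aA a'A aa'.
have /andP[vX _] := apexP aA (gB aA); have /andP[v'X _] := apexP a'A (gB a'A).
have gaa' : g a != g a' by rewrite (inj_in_eq g_inj).
have vv' : apex a (g a) != apex a' (g a') by rewrite (inj_in_eq apex_g_inj).
have AnX : [disjoint A & ~: X] by rewrite -subsets_disjoint sub_XM.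
have BnX : [disjoint B & ~: X] by rewrite -subsets_disjoint sub_XM.
by apply: (disjoint_set3 dAB AnX BnX) aa' gaa' vv'; rewrite ?inE ?gB.
Qed.

Lemma matching_transversal_edges : matching F transversal_edges.
Proof.
split.
- by apply/subsetP => _ /imsetP[a aA ->]; case/andP: (apexP aA (gB aA)).
- move=> _ _ /imsetP[a aA ->] /imsetP[a' a'A ->] ne.
  by apply: transversal_edges_disjoint => //; apply: contraNneq ne => ->.
Qed.

Lemma card_transversal_edges : #|transversal_edges| = #|A|.
Proof.
apply: card_in_imset => a a' aA a'A Ea; apply/eqP/negPn/negP => aa'.
have := transversal_edges_disjoint aA a'A aa'; rewrite Ea -setI_eq0 setIid.
by move=> /eqP/setP/(_ a'); rewrite !inE eqxx.
Qed.

Lemma transversal_edges_cap : {in transversal_edges, forall C, C :&: X \subset A :|: B}.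
Proof.
move=> _ /imsetP[a aA ->]; apply/subsetP => x; rewrite !inE -!orbA.
case/andP=> /or3P[]/eqP-> xX; rewrite ?aA ?gB ?orbT //.
by case/andP: (apexP aA (gB aA)); rewrite xX.
Qed.

End TwoMatchedMembers.

Theorem proposition3 (T : finType) (F M : {set {set T}}) :
  uniform3 F -> linear_family F -> maximum_matching F M ->
  forall A B, A \in M -> B \in M -> A != B -> #|D2AB F M A B| <= 8.
Proof.
move=> F3 linF maxM A B AM BM AB; rewrite leqNgt; apply/negP => D2AB_gt8.
have matchM := maxM.1.
have card3 E : E \in M -> #|E| = 3 by move=> EM; apply: F3; apply: (subsetP matchM.1).
have [g [gB g_inj apex_g_inj]] := latin3_transversal (card3 A AM) (card3 B BM)
  (apex_injl F3 linF matchM AM BM AB D2AB_gt8) (apex_injr F3 linF matchM AM BM AB D2AB_gt8).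
have := maximum_matching_exchange F3 maxM AM BM AB
  (matching_transversal_edges F3 linF matchM AM BM AB D2AB_gt8 gB g_inj apex_g_inj)
  (transversal_edges_cap F3 linF matchM AM BM AB D2AB_gt8 gB).
by rewrite (card_transversal_edges F3 linF matchM AM BM AB D2AB_gt8 gB g_inj apex_g_inj) card3.
Qed.
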